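(* Let $\mathbf{A}=\langle A;P\rangle$ be a partial algebra with more than one element, and let $\mathbf{A}_0$ be its one-point completion. Then for every $n$: (1) any generating set for $\mathbf{A}^n$ is a generating set for $\mathbf{A}_0^n$, and (2) any generating set for $\mathbf{A}_0^n$ contains a generating set for $\mathbf{A}^n$. In particular, least size generating sets for $\mathbf{A}^n$ and $\mathbf{A}_0^n$ have the same size, and if $\mathbf{A}^n$ or $\mathbf{A}_0^n$ have any minimal generating sets, then they are the same.
   Context: A partial algebra is a set equipped with a set of partial operations. Powers of partial algebras are formed coordinatewise: a partial operation is defined on a tuple of elements of $A^n$ exactly when it is defined in each coordinate. A subset $G$ generates a partial algebra if the smallest subset containing $G$ and closed under all partial operations (whenever defined) is the whole universe. The one-point completion of $\mathbf{A}=\langle A;P\rangle$ is the total algebra $\mathbf{A}_0$ with universe $A_0=A\cup\{0\}$, where $0\notin A$, and operations $\{p_0: p\in P\}\cup\{\wedge\}$: if $p\in P$ is an $m$-ary partial operation with domain $D\subseteq A^m$, then $p_0(\vec a)=p(\vec a)$ for $\vec a\in D$ and $p_0(\vec a)=0$ for $\vec a\in A_0^m\setminus D$; and $a\wedge b=a$ if $a=b$, $a\wedge b=0$ otherwise. *)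

From mathcomp Require Import all_boot.
From Stdlib Require Import ClassicalEpsilon.

Set Implicit Arguments.
Unset Strict Implicit.
Unset Printing Implicit Defensive.

(* A partial algebra <A; P>: carrier [carrier], the operation symbols are
   indexed by [opI]; symbol [i] has arity [arity i], domain
   [pdom i] (a psubset of A^(arity i)), and value [pop i] (only relevant
   on the domain). *)
Record palg := PAlg {
  carrier : Type;
  opI : Type;
  arity : opI -> nat;
  pdom : forall i, ('I_(arity i) -> carrier) -> Prop;
  pop : forall i, ('I_(arity i) -> carrier) -> carrier
}.

Definition psubset (X : Type) (S T : X -> Prop) := forall x, S x -> T x.

Definition closed (B : palg) (S : carrier B -> Prop) :=
  forall i (a : 'I_(arity i) -> carrier B),
    (forall j, S (a j)) -> pdom a -> S (pop a).

Definition gen_by (B : palg) (G : carrier B -> Prop) (x : carrier B) :=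
  forall S, psubset G S -> closed S -> S x.

Definition generates (B : palg) (G : carrier B -> Prop) :=
  forall x, gen_by G x.

Definition minimal_gen (B : palg) (G : carrier B -> Prop) :=
  generates G /\ forall H, psubset H G -> generates H -> psubset G H.

Definition ppow (B : palg) (n : nat) : palg :=
  @PAlg ('I_n -> carrier B) (opI B) (@arity B)
    (fun i a => forall k : 'I_n, pdom (fun j => a j k))
    (fun i a => fun k : 'I_n => pop (fun j => a j k)).

(* One-point completion. The universe is [option A], with [None] playing
   the role of the new element 0. *)
Definition p0 (B : palg) (i : opI B) (a : 'I_(arity i) -> option (carrier B))
  : option (carrier B) :=
  match excluded_middle_informative
          (exists b : 'I_(arity i) -> carrier B,
              (forall j, a j = Some (b j)) /\ pdom b) with
  | left H => Some (pop (proj1_sig (constructive_indefinite_description _ H)))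
  | right _ => None
  end.

Definition meet0 (X : Type) (a : 'I_2 -> option X) : option X :=
  match excluded_middle_informative (a ord0 = a (@Ordinal 2 1 isT)) with
  | left _ => a ord0
  | right _ => None
  end.

Definition arity0 (B : palg) (i : option (opI B)) : nat :=
  match i with Some i' => arity i' | None => 2 end.

Definition pop0 (B : palg) (i : option (opI B)) :
  ('I_(arity0 i) -> option (carrier B)) -> option (carrier B) :=
  match i as i0 return ('I_(arity0 i0) -> option (carrier B)) -> option (carrier B) with
  | Some i' => fun a => p0 a
  | None => fun a => @meet0 (carrier B) a
  end.

Definition completion (B : palg) : palg :=
  @PAlg (option (carrier B)) (option (opI B)) (@arity0 B)
    (fun _ _ => True) (@pop0 B).

Definition embed (X : Type) (n : nat) (g : 'I_n -> X) : 'I_n -> option X :=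
  fun k => Some (g k).

Definition embed_set (X : Type) (n : nat) (G : ('I_n -> X) -> Prop)
  : ('I_n -> option X) -> Prop :=
  fun y => exists g, G g /\ y = embed g.

Definition card_le (X : Type) (G : X -> Prop) (K : Type) :=
  exists f : {x | G x} -> K, forall u v, f u = f v -> u = v.

From Pilot Require Import Defs.
From mathcomp Require Import all_boot.
From Stdlib Require Import ClassicalEpsilon FunctionalExtensionality ProofIrrelevance.

Set Implicit Arguments.
Unset Strict Implicit.

(* An operation of A_0^n returns a tuple free of 0 only if all its arguments are
   free of 0 and (for a p_0) the operation p is defined coordinatewise in A.
   Hence the 0-free part of a subuniverse of A_0^n is a subuniverse of A^n,
   which gives (2).  For (1), a tuple y with zeros is the meet of the two 0-free
   tuples obtained by filling the zeros of y with two distinct elements a, b.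
   The statements on sizes and minimal generating sets then only use that the
   embedding A^n -> A_0^n is injective. *)

Lemma embed_inj (X : Type) n : injective (@embed X n).
Proof.
move=> g1 g2 E; apply: functional_extensionality => k.
by case: (f_equal (fun f => f k) E).
Qed.

Lemma embed_setE (X : Type) n (G : ('I_n -> X) -> Prop) g :
  embed_set G (embed g) <-> G g.
Proof. by split => [[h [Gh /embed_inj ->]] | Gg]; last exists g. Qed.

Lemma generates_ext (B : palg) (G H : carrier B -> Prop) :
  (forall y, G y <-> H y) -> generates G -> generates H.
Proof. by move=> GH genG x S HS; apply: genG => y /GH /HS. Qed.

Section CardLe.

Variables (X Y K : Type) (f : X -> Y).

Lemma card_le_image (G : X -> Prop) :
  card_le G K -> card_le (fun y => exists x, G x /\ y = f x) K.
Proof.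
move=> [h h_inj].
pose pre (y : {y | exists x, G x /\ y = f x}) :=
  constructive_indefinite_description _ (proj2_sig y).
exists (fun y => h (exist G (proj1_sig (pre y)) (proj1 (proj2_sig (pre y))))).
move=> [y1 p1] [y2 p2]; rewrite /pre /=.
case: (constructive_indefinite_description _ p1) => x1 [Gx1 E1].
case: (constructive_indefinite_description _ p2) => x2 [Gx2 E2] /= /h_inj E.
have Ex : x1 = x2 := f_equal (@proj1_sig _ _) E.
subst; by rewrite (proof_irrelevance _ p1 p2).
Qed.

Lemma card_le_preimage (H : Y -> Prop) :
  injective f -> card_le H K -> card_le (fun x => H (f x)) K.
Proof.
move=> f_inj [h h_inj]; exists (fun x => h (exist H (f (proj1_sig x)) (proj2_sig x))).
move=> [x1 p1] [x2 p2] /h_inj E.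
have Ex : x1 = x2 := f_inj _ _ (f_equal (@proj1_sig _ _) E).
subst; by rewrite (proof_irrelevance _ p1 p2).
Qed.

End CardLe.

Lemma p0_Some (B : palg) (i : opI B) (b : 'I_(arity i) -> carrier B) :
  pdom b -> p0 (fun j => Some (b j)) = Some (pop b).
Proof.
move=> dom_b; rewrite /p0; case: excluded_middle_informative => [e|]; last first.
  by case; exists b.
case: (constructive_indefinite_description _ e) => b' [Eb' _] /=.
congr (Some (pop _)); apply: functional_extensionality => j.
by case: (Eb' j).
Qed.

Lemma p0_eq_Some (B : palg) (i : opI B) (c : 'I_(arity i) -> option (carrier B)) v :
  p0 c = Some v -> exists b, (forall j, c j = Some (b j)) /\ pdom b /\ v = pop b.
Proof.
rewrite /p0; case: excluded_middle_informative => [e|] //.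
by case: (constructive_indefinite_description _ e) => b [Eb dom_b] /= [<-]; exists b.
Qed.

Section Completion.

Variables (B : palg) (n : nat).

Local Notation An := (ppow B n).
Local Notation A0n := (ppow (completion B) n).

Lemma pop_Some_embed i (c : 'I_(arity i) -> carrier A0n) (g : carrier An) :
  @pop A0n (Some i) c = embed g ->
  exists d, c = (fun j => embed (d j)) /\ @pdom An i d /\ g = @pop An i d.
Proof.
move=> E.
have Ek k : exists bk, (forall j, c j k = Some (bk j)) /\ pdom bk /\ g k = pop bk.
  by apply: p0_eq_Some; exact: (f_equal (fun f => f k) E).
pose d j k := if c j k is Some x then x else g k.
have dE k bk : (forall j, c j k = Some (bk j)) -> (fun j => d j k) = bk.
  by move=> Ebk; apply: functional_extensionality => j; rewrite /d Ebk.
exists d; split; last split.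
- apply: functional_extensionality => j; apply: functional_extensionality => k.
  by case: (Ek k) => bk [Ebk _]; rewrite /embed /d Ebk.
- by move=> k /=; case: (Ek k) => bk [Ebk [dom_bk _]]; rewrite (dE k bk Ebk).
- apply: functional_extensionality => k /=.
  by case: (Ek k) => bk [Ebk [_ ->]]; rewrite (dE k bk Ebk).
Qed.

Lemma pop_meet_embed (c : 'I_2 -> carrier A0n) (g : carrier An) :
  @pop A0n None c = embed g -> c ord0 = embed g.
Proof.
move=> E; apply: functional_extensionality => k.
move: (f_equal (fun f => f k) E); rewrite /= /meet0.
by case: excluded_middle_informative.
Qed.

Lemma closed_embed_preimage (S : carrier An -> Prop) :
  Defs.closed S -> @Defs.closed A0n (fun y => forall g, y = embed g -> S g).
Proof.
move=> closedS [i|] c Sc _ g Eg.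
- have [d [Ec [dom_d ->]]] := pop_Some_embed Eg.
  by apply: closedS dom_d => j; apply: Sc; rewrite Ec.
- exact: Sc ord0 g (pop_meet_embed Eg).
Qed.

Lemma closed_comp_embed (S : carrier A0n -> Prop) :
  Defs.closed S -> @Defs.closed An (fun x => S (embed x)).
Proof.
move=> closedS i d Sd dom_d.
have <- : @pop A0n (Some i) (fun j => embed (d j)) = embed (@pop An i d).
  by apply: functional_extensionality => k; apply: p0_Some.
exact: closedS.
Qed.

Lemma generates_comp_embed (G0 : carrier A0n -> Prop) :
  generates G0 -> @generates An (fun g => G0 (embed g)).
Proof.
move=> genG0 x S GS closedS.
apply: (genG0 (embed x) _ _ (closed_embed_preimage closedS)) => // y G0y g Ey.
by apply: GS; rewrite -Ey.
Qed.

Variables a b : carrier B.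
Hypothesis neq_ab : a <> b.

Lemma pop_meet_fill (y : carrier A0n) :
  @pop A0n None (fun j : 'I_2 => embed (fun k => odflt (if val j == 0 then a else b) (y k)))
  = y.
Proof.
apply: functional_extensionality => k; rewrite /= /meet0 /embed.
case: excluded_middle_informative; case: (y k) => [x|] //= E.
by case: neq_ab; case: E.
Qed.

Lemma generates_embed_set (G : carrier An -> Prop) :
  generates G -> @generates A0n (embed_set G).
Proof.
move=> genG y S GS closedS; rewrite -(pop_meet_fill y).
apply: (closedS None) => // j; apply: (genG _ (fun x => S (embed x))).
  by move=> x Gx; apply/GS/embed_setE.
exact: closed_comp_embed closedS.
Qed.

Lemma minimal_gen_comp_embed (G0 : carrier A0n -> Prop) :
  minimal_gen G0 ->
  @minimal_gen An (fun g => G0 (embed g)) /\ forall y, G0 y <-> embed_set (fun g => G0 (embed g)) y.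
Proof.
move=> [genG0 minG0].
have sub_G0 H : psubset H (fun g => G0 (embed g)) -> psubset (embed_set H) G0.
  by move=> HG0 _ [g [Hg ->]]; apply: HG0.
split=> [|y]; last first.
  split; last exact: sub_G0.
  by apply: minG0 y; [exact: sub_G0 | exact: generates_embed_set (generates_comp_embed genG0)].
split=> [|H HG0 genH g G0g]; first exact: generates_comp_embed.
by apply/(@embed_setE (carrier B)); apply: minG0 (sub_G0 _ HG0) (generates_embed_set genH) _ G0g.
Qed.

Lemma minimal_gen_embed_set (G : carrier An -> Prop) (G0 : carrier A0n -> Prop) :
  minimal_gen G -> (forall y, G0 y <-> embed_set G y) -> minimal_gen G0.
Proof.
move=> [genG minG] G0E; split=> [|H HG0 genH y /G0E [g [Gg ->]]].
  by apply: generates_ext (generates_embed_set genG) => y; split => /G0E.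
have sub_G : psubset (fun g => H (embed g)) G.
  by move=> h /HG0 /G0E /embed_setE.
exact: minG sub_G (generates_comp_embed genH) g Gg.
Qed.

End Completion.

Theorem theorem3p2 (B : palg) :
  (exists a b : carrier B, a <> b) ->
  forall n : nat,
    (* (1) *)
    (forall G : carrier (ppow B n) -> Prop,
        generates G ->
        @generates (ppow (completion B) n) (embed_set G)) /\
    (* (2) *)
    (forall G0 : carrier (ppow (completion B) n) -> Prop,
        generates G0 ->
        exists G : carrier (ppow B n) -> Prop,
          generates G /\ psubset (embed_set G) G0) /\
    (* least size generating sets have the same size *)
    (forall K : Type,
        (exists G : carrier (ppow B n) -> Prop, generates G /\ card_le G K) <->
        (exists G0 : carrier (ppow (completion B) n) -> Prop,
            generates G0 /\ card_le G0 K)) /\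
    (* the minimal generating sets are the same *)
    (forall G0 : carrier (ppow (completion B) n) -> Prop,
        minimal_gen G0 <->
        exists G : carrier (ppow B n) -> Prop,
          minimal_gen G /\ forall y, G0 y <-> embed_set G y).
Proof.
move=> [a [b neq_ab]] n.
have gen_embed := generates_embed_set neq_ab (n := n).
split; first exact: gen_embed.
split.
  move=> G0 genG0; exists (fun g => G0 (embed g)).
  by split; [exact: generates_comp_embed | move=> _ [g [G0g ->]]].
split.
  move=> K; split=> [[G [genG leGK]] | [G0 [genG0 leG0K]]].
    by exists (embed_set G); split; [exact: gen_embed | exact: card_le_image leGK].
  exists (fun g => G0 (embed g)).
  by split; [exact: generates_comp_embed | exact: card_le_preimage (@embed_inj _ n) leG0K].
move=> G0; split=> [minG0 | [G [minG G0E]]].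
  by exists (fun g => G0 (embed g)); apply: minimal_gen_comp_embed neq_ab _ minG0.
exact: (minimal_gen_embed_set neq_ab minG G0E).
Qed.
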